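(* Let $c_0>0$, $T>0$, and let $(\hat u,\hat v)$ be a smooth solution of the NLDE on $\mathbb{R}\times[0,T]$ with $\mathcal{M}_0,\mathcal{M}<\infty$. There exist constants $\hat C_4,\hat C_5>0$, depending only on $c_0,\mathcal{M}_0,\mathcal{M},m,\alpha,\beta$, such that for every $\tau\in(0,1)$, every time-splitting solution with mesh $\tau$ whose initial data satisfy $\sum_j(|u_j^0|^2+|v_j^0|^2)\tau\le c_0$, all $j\in\mathbb{Z}$ and all integers $n\ge0$ with $(n+1)\tau\le T$, $$|\mathcal{U}_j^n(\tau)|^2\le|\mathcal{U}_j^n(0)|^2+\hat C_4\big(\tilde{\mathcal{L}}_j^n(0)+\tilde{\mathcal{D}}_j^n(0)\big)\tau+\hat C_5\mathcal{M}^2\tau^2,$$ $$|\mathcal{V}_{j+2}^n(\tau)|^2\le|\mathcal{V}_{j+2}^n(0)|^2+\hat C_4\big(\tilde{\mathcal{L}}_j^n(0)+\tilde{\mathcal{D}}_j^n(0)\big)\tau+\hat C_5\mathcal{M}^2\tau^2.$$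
   Context: Fix constants $m\ge 0$ and $\alpha,\beta\in\mathbb{R}$. The NLDE for $(u,v):\mathbb{R}\times[0,T]\to\mathbb{C}^2$ is $u_t+u_x=imv+i\alpha u|v|^2+2i\beta(\bar u v+u\bar v)v$, $v_t-v_x=imu+i\alpha v|u|^2+2i\beta(\bar u v+u\bar v)u$. Let (N) denote the ODE system on $\mathbb{C}^2$: $\frac{du}{ds}=imv+i\alpha u|v|^2+2i\beta(\bar u v+u\bar v)v$, $\frac{dv}{ds}=imu+i\alpha v|u|^2+2i\beta(\bar u v+u\bar v)u$. Time-splitting scheme with mesh $\tau>0$: given $(u_j^0,v_j^0)_{j\in\mathbb{Z}}\subset\mathbb{C}^2$ with $\sum_j(|u_j^0|^2+|v_j^0|^2)<\infty$, set $(u^{(\tau)},v^{(\tau)})(x,0)=(u_j^0,v_j^0)$ for $x\in[j\tau,(j+1)\tau)$. Inductively, once $(u^{(\tau)},v^{(\tau)})(\cdot,n\tau)$ is defined, set for $t\in[n\tau,(n+1)\tau)$: $u^{(\tau)}(x,t)=u^{(\tau)}(x-(t-n\tau),n\tau)$, $v^{(\tau)}(x,t)=v^{(\tau)}(x+(t-n\tau),n\tau)$; let $(u^{(\tau)},v^{(\tau)})(x,(n+1)\tau-)$ be the left limit in $t$; and for each $x$ define $(u^{(\tau)},v^{(\tau)})(x,(n+1)\tau)$ as the value at $s=\tau$ of the solution of (N) with value $(u^{(\tau)},v^{(\tau)})(x,(n+1)\tau-)$ at $s=0$ (this is globally well defined). Notation: $(u_j^n,v_j^n)=(u^{(\tau)},v^{(\tau)})(j\tau,n\tau)$,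 $(u_j^{n+1-},v_j^{n+1-})=(u^{(\tau)},v^{(\tau)})(j\tau,(n+1)\tau-)$; $(u_j^{n,2}(s),v_j^{n,2}(s))$, $s\in[0,\tau]$, is the solution of (N) with initial value $(u_j^{n+1-},v_j^{n+1-})$. Comparison quantities: $\mathcal{M}_0=\max_{\mathbb{R}\times[0,T]}(|\hat u|+|\hat v|+1)$, $\mathcal{M}=\max_{\mathbb{R}\times[0,T]}(|\hat u_t|+|\hat u_x|+|\hat v_t|+|\hat v_x|+1)$. For $s\in[0,\tau]$: $\mathcal{U}_j^n(s)=\hat u(j\tau+s,n\tau+s)-u_{j+1}^{n,2}(s)$, $\mathcal{V}_{j+2}^n(s)=\hat v((j+2)\tau-s,n\tau+s)-v_{j+1}^{n,2}(s)$, $\tilde{\mathcal{L}}_j^n(s)=|\mathcal{U}_j^n(s)|^2+|\mathcal{V}_{j+2}^n(s)|^2$, $\tilde{\mathcal{D}}_j^n(s)=|\mathcal{U}_j^n(s)|^2|v_{j+1}^{n,2}(s)|^2+|\mathcal{V}_{j+2}^n(s)|^2|u_{j+1}^{n,2}(s)|^2$. *)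

From Stdlib Require Import Reals ZArith List.
From Coquelicot Require Import Coquelicot.
Open Scope R_scope.

Definition NLu (m alpha beta : R) (u v : C) : C :=
  (Ci * RtoC m * v + Ci * RtoC alpha * u * RtoC (Cmod v ^ 2)
   + RtoC 2 * Ci * RtoC beta * (Cconj u * v + u * Cconj v) * v)%C.

Definition NLv (m alpha beta : R) (u v : C) : C :=
  (Ci * RtoC m * u + Ci * RtoC alpha * v * RtoC (Cmod u ^ 2)
   + RtoC 2 * Ci * RtoC beta * (Cconj u * v + u * Cconj v) * u)%C.

(* f : R -> R -> C (arguments x, t) is C^infinity on R^2: there is a family
   D l of functions, indexed by the list l of differentiation directions
   (false = d/dx, true = d/dt), with D nil = f, such that every D l is jointly
   continuous and its partial derivatives are D (false :: l) and D (true :: l). *)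
Definition smooth2 (f : R -> R -> C) : Prop :=
  exists D : list bool -> R -> R -> C,
    D nil = f /\
    forall (l : list bool) (x t : R),
      is_derive (fun y => D l y t) x (D (false :: l) x t) /\
      is_derive (fun s => D l x s) t (D (true :: l) x t) /\
      filterlim (fun p : R * R => D l (fst p) (snd p))
                (locally ((x, t) : R * R)) (locally (D l x t)).

Definition zsum (g : Z -> R) (N : nat) : R :=
  sum_f_R0 (fun k => g (Z.of_nat k - Z.of_nat N)%Z) (2 * N).

From Stdlib Require Import Reals ZArith List Lra Lia Psatz.
From Coquelicot Require Import Coquelicot.
Open Scope R_scope.

(* Along the two characteristics through a grid cell, the errors [U = uh - U2] and
   [V = vh - V2] satisfy d|U|^2/ds <= A (|U|^2 |V2|^2 + |U|^2 + |V|^2) + 8 A M^2 tau^2 and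
   symmetrically for V: the nonlinearity is locally Lipschitz with a quadratic weight, and the
   last term accounts for comparing the exact solution on two characteristics that are
   2 (tau - s) apart.  The flow (N) conserves |U2|^2 + |V2|^2 =: W and the scheme conserves the
   discrete mass, so W tau <= c0.  Gronwall then bounds |U|^2 + |V|^2, |U|^2 and |V2|^2 over the
   step; the growth rate of |V2|^2 contains |V2|^2 / tau, which is harmless over an interval of
   length tau.  Inserting these bounds into the differential inequality and integrating gives
   the estimate. *)

(* [Cdot z w] is [Re (conj z * w)], so that [d/ds |f|^2 = 2 Cdot f f']. *)
Definition Cdot (z w : C) : R := fst z * fst w + snd z * snd w.
Arguments Cdot (z w)%_C.

Lemma Cdot_le_Cmod (z w : C) : Cdot z w <= Cmod z * Cmod w.
Proof.
  rewrite <- (Cmod_conj z), <- Cmod_mult.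
  eapply Rle_trans; [|apply re_le_Cmod].
  eapply Rle_trans; [|apply Rle_abs].
  destruct z, w; unfold Cdot, Re; simpl; lra.
Qed.

Lemma Cdot_sub_r_split (z x y w : C) :
  Cdot z (x - w) = Cdot z (x - y) + Cdot z (y - w).
Proof. destruct z, x, y, w; unfold Cdot; simpl; ring. Qed.

Lemma Cmod_sub_sym (z w : C) : Cmod (z - w) = Cmod (w - z).
Proof.
  rewrite <- Cmod_opp. f_equal. destruct z, w; apply injective_projections; simpl; ring.
Qed.

Lemma Cmod_sub_le (z w y : C) : Cmod (z - w) <= Cmod (z - y) + Cmod (y - w).
Proof.
  replace (z - w)%C with ((z - y) + (y - w))%C
    by (destruct z, w, y; apply injective_projections; simpl; ring).
  apply Cmod_triangle.
Qed.

Lemma Rabs_Cmod_sqr_sub_le (z w : C) :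
  Rabs (Cmod z ^ 2 - Cmod w ^ 2) <= Cmod (z - w) * (Cmod z + Cmod w).
Proof.
  assert (Hz := Cmod_ge_0 z). assert (Hw := Cmod_ge_0 w).
  assert (H1 : Cmod z <= Cmod (z - w) + Cmod w).
  { replace z with ((z - w) + w)%C at 1
      by (destruct z, w; apply injective_projections; simpl; ring).
    apply Cmod_triangle. }
  assert (H2 : Cmod w <= Cmod (z - w) + Cmod z).
  { rewrite Cmod_sub_sym. replace w with ((w - z) + z)%C at 1
      by (destruct z, w; apply injective_projections; simpl; ring).
    apply Cmod_triangle. }
  replace (Cmod z ^ 2 - Cmod w ^ 2) with ((Cmod z - Cmod w) * (Cmod z + Cmod w)) by ring.
  rewrite Rabs_mult, (Rabs_right (Cmod z + Cmod w)) by lra.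
  apply Rmult_le_compat_r; [lra|]. apply Rabs_le; lra.
Qed.

Lemma double_mul_le_abs_sqr (c x y : R) : 2 * (c * x * y) <= Rabs c * (x ^ 2 + y ^ 2).
Proof.
  assert (H1 : c * x * y <= Rabs c * (Rabs x * Rabs y))
    by (rewrite <- !Rabs_mult, Rmult_assoc; apply Rle_abs).
  assert (H2 : 2 * (Rabs x * Rabs y) <= x ^ 2 + y ^ 2)
    by (rewrite <- (pow2_abs x), <- (pow2_abs y); generalize (pow2_ge_0 (Rabs x - Rabs y)); nra).
  assert (H3 := Rabs_pos c). nra.
Qed.

Lemma double_le_add_of_sqr_le_mul (z X Y : R) :
  0 <= X -> 0 <= Y -> z ^ 2 <= X * Y -> 2 * z <= X + Y.
Proof.
  intros HX HY H. destruct (Rle_dec z 0) as [Hz|Hz]; [lra|].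
  assert (0 <= (X - Y) ^ 2) by apply pow2_ge_0. nra.
Qed.

Lemma NLv_NLu (m al be : R) (u v : C) : NLv m al be u v = NLu m al be v u.
Proof.
  destruct u, v; unfold NLu, NLv; rewrite !Cmod2_alt; unfold Re, Im.
  apply injective_projections; simpl; ring.
Qed.

Lemma Cdot_NL_mass (m al be : R) (u v : C) :
  Cdot u (NLu m al be u v) + Cdot v (NLv m al be u v) = 0.
Proof. destruct u, v; unfold Cdot, NLu, NLv; rewrite !Cmod2_alt; unfold Re, Im; simpl; ring. Qed.

Lemma Cdot_NLv_self (m al be : R) (u v : C) :
  2 * Cdot v (NLv m al be u v)
  = 2 * (m + 4 * be * Cdot u v) * (snd v * fst u - fst v * snd u).
Proof. destruct u, v; unfold Cdot, NLu, NLv; rewrite !Cmod2_alt; unfold Re, Im; simpl; ring. Qed.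

Lemma Cdot_NLv_self_le (m al be tau : R) (u v : C) : 0 < tau -> 0 <= m ->
  2 * Cdot v (NLv m al be u v)
  <= Cmod v ^ 2 / tau + 4 * Rabs be * Cmod u ^ 2 * Cmod v ^ 2 + m ^ 2 * tau * Cmod u ^ 2.
Proof.
  intros Ht Hm. rewrite Cdot_NLv_self, !Cmod2_alt. unfold Re, Im.
  set (r := Cdot u v). set (I := snd v * fst u - fst v * snd u).
  set (p := fst u ^ 2 + snd u ^ 2). set (q := fst v ^ 2 + snd v ^ 2).
  assert (Lagrange : r ^ 2 + I ^ 2 = p * q) by (unfold r, I, p, q, Cdot; ring).
  assert (Hp : 0 <= p) by (unfold p; nra). assert (Hq : 0 <= q) by (unfold q; nra).
  assert (Hrot : 2 * (m * I) <= q / tau + m ^ 2 * tau * p).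
  { apply double_le_add_of_sqr_le_mul.
    - unfold Rdiv; apply Rmult_le_pos; [lra | left; apply Rinv_0_lt_compat; lra].
    - apply Rmult_le_pos; [apply Rmult_le_pos; [apply pow2_ge_0 | lra] | exact Hp].
    - replace (q / tau * (m ^ 2 * tau * p)) with (m ^ 2 * (p * q)) by (field; lra).
      assert (0 <= r ^ 2) by apply pow2_ge_0. assert (0 <= m ^ 2) by apply pow2_ge_0.
      replace ((m * I) ^ 2) with (m ^ 2 * I ^ 2) by ring. nra. }
  assert (Hcub := double_mul_le_abs_sqr (4 * be) r I).
  rewrite Rabs_mult, (Rabs_right 4), Lagrange in Hcub by lra.
  replace (2 * (m + 4 * be * r) * I) with (2 * (m * I) + 2 * (4 * be * r * I)) by ring.
  lra.
Qed.

Lemma Cdot_NLu_sub_l (m al be : R) (a u v : C) :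
  2 * Cdot (a - u) (NLu m al be a v - NLu m al be u v)
  = -8 * be * Cdot (a - u) v * (fst (a - u)%C * snd v - snd (a - u)%C * fst v).
Proof. destruct a, u, v; unfold Cdot, NLu; rewrite !Cmod2_alt; unfold Re, Im; simpl; ring. Qed.

Lemma Cdot_NLu_sub_l_le (m al be : R) (a u v : C) :
  2 * Cdot (a - u) (NLu m al be a v - NLu m al be u v)
  <= 4 * Rabs be * Cmod (a - u) ^ 2 * Cmod v ^ 2.
Proof.
  rewrite Cdot_NLu_sub_l, !Cmod2_alt. unfold Re, Im.
  set (w1 := Cdot (a - u) v). set (w2 := fst (a - u)%C * snd v - snd (a - u)%C * fst v).
  assert (H := double_mul_le_abs_sqr (-4 * be) w1 w2).
  rewrite Rabs_mult, (Rabs_left (-4)) in H by lra.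
  replace (4 * Rabs be * (fst (a - u)%C ^ 2 + snd (a - u)%C ^ 2) * (fst v ^ 2 + snd v ^ 2))
    with (4 * Rabs be * (w1 ^ 2 + w2 ^ 2)) by (unfold w1, w2, Cdot; ring).
  lra.
Qed.

Lemma NLu_sub_r (m al be : R) (a b v : C) :
  (NLu m al be a b - NLu m al be a v)%C
  = (Ci * RtoC m * (b - v) + Ci * RtoC (al + 2 * be) * a * RtoC (Cmod b ^ 2 - Cmod v ^ 2)
     + RtoC 2 * Ci * RtoC be * Cconj a * ((b - v) * (b + v)))%C.
Proof.
  destruct a, b, v; unfold NLu; rewrite !Cmod2_alt; unfold Re, Im.
  apply injective_projections; simpl; ring.
Qed.

Lemma Cmod_NLu_sub_r_le (m al be : R) (a b v : C) : 0 <= m ->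
  Cmod (NLu m al be a b - NLu m al be a v)%C
  <= Cmod (b - v) * (m + (Rabs al + 4 * Rabs be) * Cmod a * (Cmod b + Cmod v)).
Proof.
  intro Hm. rewrite NLu_sub_r.
  assert (Hsq := Rabs_Cmod_sqr_sub_le b v).
  assert (Hplus := Cmod_triangle b v).
  assert (Hab : Rabs (al + 2 * be) <= Rabs al + 2 * Rabs be).
  { eapply Rle_trans; [apply Rabs_triang|]. rewrite Rabs_mult, (Rabs_right 2); lra. }
  eapply Rle_trans; [apply Cmod_triangle|].
  eapply Rle_trans; [apply Rplus_le_compat_r, Cmod_triangle|].
  rewrite !Cmod_mult, !Cmod_R, Cmod_Ci, Cmod_conj, (Rabs_right m), (Rabs_right 2) by lra.
  assert (Hd := Cmod_ge_0 (b - v)). assert (Ha := Cmod_ge_0 a).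
  assert (Hal := Rabs_pos al). assert (Hbe := Rabs_pos be).
  assert (Hbv : 0 <= Cmod (b + v)) by apply Cmod_ge_0.
  assert (H1 : Rabs (al + 2 * be) * Cmod a * Rabs (Cmod b ^ 2 - Cmod v ^ 2)
               <= (Rabs al + 2 * Rabs be) * Cmod a * (Cmod (b - v) * (Cmod b + Cmod v))).
  { apply Rmult_le_compat; try apply Rmult_le_pos; try apply Rabs_pos; auto.
    apply Rmult_le_compat_r; auto. }
  assert (H2 : Rabs be * Cmod a * (Cmod (b - v) * Cmod (b + v))
               <= Rabs be * Cmod a * (Cmod (b - v) * (Cmod b + Cmod v))).
  { apply Rmult_le_compat_l; [nra|]. apply Rmult_le_compat_l; lra. }
  nra.
Qed.

Lemma Cdot_NLu_sub_le (m al be : R) (a b u v : C) : 0 <= m ->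
  2 * Cdot (a - u) (NLu m al be a b - NLu m al be u v)
  <= 4 * Rabs be * Cmod (a - u) ^ 2 * Cmod v ^ 2
     + 2 * Cmod (a - u) * (Cmod (b - v) * (m + (Rabs al + 4 * Rabs be) * Cmod a * (Cmod b + Cmod v))).
Proof.
  intro Hm. rewrite (Cdot_sub_r_split _ _ (NLu m al be a v)).
  assert (H1 := Cdot_le_Cmod (a - u) (NLu m al be a b - NLu m al be a v)).
  assert (H2 := Cmod_NLu_sub_r_le m al be a b v Hm).
  assert (H3 := Cdot_NLu_sub_l_le m al be a u v).
  assert (H4 := Cmod_ge_0 (a - u)).
  assert (Cmod (a - u) * Cmod (NLu m al be a b - NLu m al be a v)
          <= Cmod (a - u) * (Cmod (b - v) * (m + (Rabs al + 4 * Rabs be) * Cmod a * (Cmod b + Cmod v))))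
    by (apply Rmult_le_compat_l; auto).
  lra.
Qed.

Lemma young_three (b4 k1 k2 w x d y e : R) :
  0 <= b4 -> 0 <= k1 -> 0 <= k2 -> 0 <= y -> 0 <= e -> 0 <= d -> d <= e + y ->
  b4 * w ^ 2 + 2 * x * d * k1 + 2 * w * d * k2
  <= 2 * (k1 + k2 + b4 + 1) * (w ^ 2 + x ^ 2 + y ^ 2) + 2 * (k1 + k2 + b4 + 1) * e ^ 2.
Proof.
  intros Hb4 Hk1 Hk2 Hy He Hd Hdey.
  assert (H1 : 2 * x * d * k1 <= k1 * (x ^ 2 + d ^ 2))
    by (generalize (pow2_ge_0 (x - d)); nra).
  assert (H2 : 2 * w * d * k2 <= k2 * (w ^ 2 + d ^ 2))
    by (generalize (pow2_ge_0 (w - d)); nra).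
  assert (H3 : d ^ 2 <= 2 * e ^ 2 + 2 * y ^ 2)
    by (generalize (pow2_ge_0 (e - y)); nra).
  assert (H4 : (k1 + k2) * d ^ 2 <= (k1 + k2) * (2 * e ^ 2 + 2 * y ^ 2))
    by (apply Rmult_le_compat_l; lra).
  generalize (pow2_ge_0 w) (pow2_ge_0 x) (pow2_ge_0 y) (pow2_ge_0 e). nra.
Qed.

Definition NL_lip (m al be M0 : R) : R :=
  2 * ((m + (Rabs al + 4 * Rabs be) * M0 ^ 2) + (Rabs al + 4 * Rabs be) * M0 + 4 * Rabs be + 1).

Lemma NL_lip_ge0 (m al be M0 : R) : 0 <= m -> 0 <= M0 -> 0 <= NL_lip m al be M0.
Proof.
  intros Hm HM0. unfold NL_lip.
  assert (Hc : 0 <= Rabs al + 4 * Rabs be) by (generalize (Rabs_pos al) (Rabs_pos be); lra).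
  generalize (Rabs_pos be) (pow2_ge_0 M0). nra.
Qed.

(* [b] and [b'] are the exact second component at the point of [a] and at the point
   where [v] is compared with it. *)
Lemma Cdot_NLu_sub_le_lip (m al be M0 : R) (a b b' u v : C) : 0 <= m ->
  Cmod a <= M0 -> Cmod b <= M0 ->
  2 * Cdot (a - u) (NLu m al be a b - NLu m al be u v)
  <= NL_lip m al be M0 * (Cmod (a - u) ^ 2 * Cmod v ^ 2 + Cmod (a - u) ^ 2 + Cmod (b' - v) ^ 2)
     + NL_lip m al be M0 * Cmod (b - b') ^ 2.
Proof.
  intros Hm Ha Hb.
  eapply Rle_trans; [apply Cdot_NLu_sub_le; exact Hm|].
  set (c := Rabs al + 4 * Rabs be).
  assert (Hc : 0 <= c) by (unfold c; generalize (Rabs_pos al) (Rabs_pos be); lra).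
  set (x := Cmod (a - u)). set (z := Cmod v). set (d := Cmod (b - v)).
  assert (Hx : 0 <= x) by apply Cmod_ge_0. assert (Hz : 0 <= z) by apply Cmod_ge_0.
  assert (Hd : 0 <= d) by apply Cmod_ge_0.
  assert (HM0 : 0 <= M0) by (generalize (Cmod_ge_0 a); lra).
  assert (Hca : c * Cmod a * (Cmod b + z) <= c * M0 * (M0 + z)).
  { rewrite !Rmult_assoc. apply Rmult_le_compat_l; [exact Hc|].
    apply Rmult_le_compat; generalize (Cmod_ge_0 a) (Cmod_ge_0 b); lra. }
  assert (H : 2 * x * (d * (m + c * Cmod a * (Cmod b + z)))
              <= 2 * x * d * (m + c * M0 ^ 2) + 2 * (x * z) * d * (c * M0)).
  { replace (2 * x * d * (m + c * M0 ^ 2) + 2 * (x * z) * d * (c * M0))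
      with (2 * x * (d * (m + c * M0 * (M0 + z)))) by ring.
    apply Rmult_le_compat_l; [lra|]. apply Rmult_le_compat_l; lra. }
  assert (Hdey : d <= Cmod (b - b') + Cmod (b' - v)) by apply Cmod_sub_le.
  assert (Hy := young_three (4 * Rabs be) (m + c * M0 ^ 2) (c * M0) (x * z) x d
                  (Cmod (b' - v)) (Cmod (b - b'))).
  unfold NL_lip. fold c.
  replace (4 * Rabs be * x ^ 2 * z ^ 2) with (4 * Rabs be * (x * z) ^ 2) by ring.
  replace (x ^ 2 * z ^ 2) with ((x * z) ^ 2) by ring.
  generalize (Rabs_pos be) (pow2_ge_0 M0) (Cmod_ge_0 (b' - v)) (Cmod_ge_0 (b - b')). intros.
  assert (0 <= c * M0) by nra. assert (0 <= m + c * M0 ^ 2) by nra.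
  specialize (Hy ltac:(lra) ltac:(lra) ltac:(lra) ltac:(lra) ltac:(lra) Hd Hdey).
  lra.
Qed.

Lemma MVT_is_derive (phi dphi : R -> R) (a b : R) : a <= b ->
  (forall s, is_derive phi s (dphi s)) ->
  exists c, a <= c <= b /\ phi b - phi a = dphi c * (b - a).
Proof.
  intros Hab Hd.
  destruct (MVT_gen phi a b dphi) as [c [Hc E]].
  - intros; apply Hd.
  - intros x _. apply derivable_continuous_pt. exists (dphi x). apply is_derive_Reals, Hd.
  - exists c. rewrite Rmin_left, Rmax_right in Hc by lra. auto.
Qed.

Lemma increment_le_of_derive_le (phi dphi : R -> R) (tau K : R) : 0 <= tau ->
  (forall s, is_derive phi s (dphi s)) ->
  (forall s, 0 <= s <= tau -> dphi s <= K) -> phi tau <= phi 0 + K * tau.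
Proof.
  intros Ht Hd HK. destruct (MVT_is_derive phi dphi 0 tau Ht Hd) as [c [Hc E]].
  assert (dphi c * tau <= K * tau) by (apply Rmult_le_compat_r; [lra | apply HK; lra]).
  lra.
Qed.

Lemma exp_le_compat (x y : R) : x <= y -> exp x <= exp y.
Proof.
  intros [H|H]; [left; apply exp_increasing; exact H | subst; lra].
Qed.

(* Gronwall: [exp (-k s) phi s - h s] is nonincreasing. *)
Lemma gronwall_affine (phi dphi : R -> R) (k h tau : R) : 0 <= k -> 0 <= h ->
  (forall s, is_derive phi s (dphi s)) ->
  (forall s, 0 <= s <= tau -> dphi s <= k * phi s + h) ->
  forall s, 0 <= s <= tau -> phi s <= exp (k * s) * (phi 0 + h * s).
Proof.
  intros Hk Hh Hd Hi s Hs.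
  set (psi := fun s => exp (- k * s) * phi s - h * s).
  set (dpsi := fun s => exp (- k * s) * (dphi s - k * phi s) - h).
  assert (Hpsi : forall x, is_derive psi x (dpsi x)).
  { intro x. unfold psi, dpsi.
    apply (is_derive_ext (fun s => exp (- k * s) * phi s + - (h * s))); [reflexivity|].
    replace (exp (- k * x) * (dphi x - k * phi x) - h)
      with (- k * exp (- k * x) * phi x + exp (- k * x) * dphi x + - h) by ring.
    apply (is_derive_plus _ (fun s => - (h * s))).
    - apply (is_derive_mult (fun s => exp (- k * s)) phi); [| apply Hd | apply Rmult_comm].
      auto_derive; [auto | ring].
    - auto_derive; [auto | ring]. }
  assert (Hdec : psi s <= psi 0).
  { destruct (MVT_is_derive psi dpsi 0 s (proj1 Hs) Hpsi) as [c [Hc E]].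
    assert (Hc' : dpsi c <= 0).
    { unfold dpsi. assert (Hic := Hi c ltac:(lra)).
      assert (He1 : exp (- k * c) <= 1)
        by (rewrite <- exp_0; apply exp_le_compat; nra).
      assert (He0 := exp_pos (- k * c)). nra. }
    nra. }
  unfold psi in Hdec. rewrite Rmult_0_r, exp_0, Rmult_1_l, Rmult_0_r, Rminus_0_r in Hdec.
  assert (Hinv : exp (k * s) * exp (- k * s) = 1)
    by (rewrite <- exp_plus, <- exp_0; f_equal; ring).
  assert (Hep := exp_pos (k * s)).
  replace (phi s) with (exp (k * s) * (exp (- k * s) * phi s))
    by (rewrite <- Rmult_assoc, Hinv; ring).
  apply Rmult_le_compat_l; lra.
Qed.

Lemma is_derive_fst (f : R -> C) (x : R) (l : C) :
  is_derive f x l -> is_derive (fun y => fst (f y)) x (fst l).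
Proof.
  intro H. apply (filterdiff_comp' f (fun z : C => fst z) x _ (fun z : C => fst z) H).
  apply filterdiff_linear, is_linear_fst.
Qed.

Lemma is_derive_snd (f : R -> C) (x : R) (l : C) :
  is_derive f x l -> is_derive (fun y => snd (f y)) x (snd l).
Proof.
  intro H. apply (filterdiff_comp' f (fun z : C => snd z) x _ (fun z : C => snd z) H).
  apply filterdiff_linear, is_linear_snd.
Qed.

Lemma is_derive_Cmod_sqr_components (f : R -> C) (s : R) (l : C) :
  is_derive (fun x => fst (f x)) s (fst l) -> is_derive (fun x => snd (f x)) s (snd l) ->
  is_derive (fun x => Cmod (f x) ^ 2) s (2 * Cdot (f s) l).
Proof.
  intros H1 H2.
  assert (P := is_derive_plus _ _ s _ _ (is_derive_mult _ _ s _ _ H1 H1 Rmult_comm)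
                                        (is_derive_mult _ _ s _ _ H2 H2 Rmult_comm)).
  unfold plus, mult in P; simpl in P.
  replace (2 * Cdot (f s) l)
    with (fst l * fst (f s) + fst (f s) * fst l + (snd l * snd (f s) + snd (f s) * snd l))
    by (unfold Cdot; ring).
  eapply is_derive_ext; [|exact P]. intro x. rewrite Cmod2_alt. unfold Re, Im. simpl. ring.
Qed.

Lemma is_derive_Cmod_sqr (f : R -> C) (s : R) (l : C) :
  is_derive f s l -> is_derive (fun x => Cmod (f x) ^ 2) s (2 * Cdot (f s) l).
Proof.
  intro H. apply is_derive_Cmod_sqr_components; [apply is_derive_fst | apply is_derive_snd]; exact H.
Qed.

(* Joint continuity of [gx] is what makes [g] differentiable in both variables at once. *)
Lemma is_derive_line (g gx gt : R -> R -> R) (x0 t0 sg s : R) :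
  (forall x t, is_derive (fun y => g y t) x (gx x t)) ->
  (forall x t, is_derive (fun z => g x z) t (gt x t)) ->
  (forall x t, continuous (fun p : R * R => gx (fst p) (snd p)) (x, t)) ->
  is_derive (fun s => g (x0 + sg * s) (t0 + s)) s
     (sg * gx (x0 + sg * s) (t0 + s) + gt (x0 + sg * s) (t0 + s)).
Proof.
  intros Hx Ht Hc.
  assert (Hd : differentiable_pt_lim g (x0 + sg * s) (t0 + s)
                 (gx (x0 + sg * s) (t0 + s)) (gt (x0 + sg * s) (t0 + s))).
  { apply filterdiff_differentiable_pt_lim.
    eapply filterdiff_ext_lin.
    - apply is_derive_filterdiff; [apply filter_forall; intro p; apply Hx | apply Ht | apply Hc].
    - intros [p1 p2]. simpl. unfold plus, scal; simpl. unfold mult; simpl. ring. }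
  apply is_derive_Reals.
  replace (sg * gx (x0 + sg * s) (t0 + s) + gt (x0 + sg * s) (t0 + s))
    with (gx (x0 + sg * s) (t0 + s) * sg + gt (x0 + sg * s) (t0 + s) * 1) by ring.
  apply (derivable_pt_lim_comp_2d g (fun s => x0 + sg * s) (fun s => t0 + s)); [exact Hd | |];
    apply is_derive_Reals; auto_derive; auto; ring.
Qed.

Lemma smooth2_derive_x_continuous (p p_x : R -> R -> C) : smooth2 p ->
  (forall x t, is_derive (fun y => p y t) x (p_x x t)) ->
  forall x t, continuous (fun q : R * R => p_x (fst q) (snd q)) (x, t).
Proof.
  intros [D [HD0 HD]] Hx.
  assert (E : forall x t, p_x x t = D (false :: nil) x t).
  { intros x t. destruct (HD nil x t) as [H _]. rewrite HD0 in H.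
    assert (U1 := is_derive_unique _ _ _ (is_derive_fst _ _ _ H)).
    assert (U2 := is_derive_unique _ _ _ (is_derive_fst _ _ _ (Hx x t))).
    assert (U3 := is_derive_unique _ _ _ (is_derive_snd _ _ _ H)).
    assert (U4 := is_derive_unique _ _ _ (is_derive_snd _ _ _ (Hx x t))).
    apply injective_projections; congruence. }
  intros x t. destruct (HD (false :: nil) x t) as [_ [_ Hc]].
  unfold continuous. rewrite E.
  eapply filterlim_ext; [|exact Hc]. intro q. symmetry. apply E.
Qed.

Lemma continuous_fst_comp {U : UniformSpace} (f : U -> C) (x : U) :
  continuous f x -> continuous (fun y => fst (f y)) x.
Proof.
  intro H. apply (continuous_comp f fst); [exact H|].
  rewrite (surjective_pairing (f x)). apply continuous_fst.
Qed.

Lemma continuous_snd_comp {U : UniformSpace} (f : U -> C) (x : U) :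
  continuous f x -> continuous (fun y => snd (f y)) x.
Proof.
  intro H. apply (continuous_comp f snd); [exact H|].
  rewrite (surjective_pairing (f x)). apply continuous_snd.
Qed.

Lemma is_derive_Cmod_sqr_line_sub (p p_t p_x : R -> R -> C) (w dw : R -> C) (x0 t0 sg s : R) :
  smooth2 p ->
  (forall x t, is_derive (fun z => p x z) t (p_t x t)) ->
  (forall x t, is_derive (fun y => p y t) x (p_x x t)) ->
  (forall s, is_derive w s (dw s)) ->
  is_derive (fun s => Cmod (p (x0 + sg * s) (t0 + s) - w s) ^ 2) s
    (2 * Cdot (p (x0 + sg * s) (t0 + s) - w s)
              (RtoC sg * p_x (x0 + sg * s) (t0 + s) + p_t (x0 + sg * s) (t0 + s) - dw s)).
Proof.
  intros Hp Ht Hx Hw.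
  assert (Hc := smooth2_derive_x_continuous p p_x Hp Hx).
  apply is_derive_Cmod_sqr_components.
  - assert (Hl := is_derive_line (fun x t => fst (p x t)) (fun x t => fst (p_x x t))
                    (fun x t => fst (p_t x t)) x0 t0 sg s).
    assert (Hd := is_derive_minus _ _ s _ _
      (Hl (fun x t => is_derive_fst _ _ _ (Hx x t)) (fun x t => is_derive_fst _ _ _ (Ht x t))
          (fun x t => continuous_fst_comp _ _ (Hc x t)))
      (is_derive_fst _ _ _ (Hw s))).
    unfold minus, plus, opp in Hd; simpl in Hd.
    match type of Hd with is_derive _ _ ?l =>
      match goal with |- is_derive _ _ ?l' => replace l' with l by (simpl; ring) end end.
    eapply is_derive_ext; [|exact Hd]. intro y. simpl. ring.
  - assert (Hl := is_derive_line (fun x t => snd (p x t)) (fun x t => snd (p_x x t))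
                    (fun x t => snd (p_t x t)) x0 t0 sg s).
    assert (Hd := is_derive_minus _ _ s _ _
      (Hl (fun x t => is_derive_snd _ _ _ (Hx x t)) (fun x t => is_derive_snd _ _ _ (Ht x t))
          (fun x t => continuous_snd_comp _ _ (Hc x t)))
      (is_derive_snd _ _ _ (Hw s))).
    unfold minus, plus, opp in Hd; simpl in Hd.
    match type of Hd with is_derive _ _ ?l =>
      match goal with |- is_derive _ _ ?l' => replace l' with l by (simpl; ring) end end.
    eapply is_derive_ext; [|exact Hd]. intro y. simpl. ring.
Qed.

Lemma const_of_derive_0 (phi : R -> R) (a b : R) :
  (forall s, is_derive phi s 0) -> phi a = phi b.
Proof.
  intro Hd. destruct (Rle_dec a b) as [H|H].
  - destruct (MVT_is_derive phi (fun _ => 0) a b H Hd) as [c [_ E]]. lra.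
  - destruct (MVT_is_derive phi (fun _ => 0) b a ltac:(lra) Hd) as [c [_ E]]. lra.
Qed.

Lemma NL_flow_mass (m al be : R) (U V : R -> C) :
  (forall s, is_derive U s (NLu m al be (U s) (V s)) /\ is_derive V s (NLv m al be (U s) (V s))) ->
  forall s, Cmod (U s) ^ 2 + Cmod (V s) ^ 2 = Cmod (U 0) ^ 2 + Cmod (V 0) ^ 2.
Proof.
  intros H s. apply (const_of_derive_0 (fun s => Cmod (U s) ^ 2 + Cmod (V s) ^ 2)). intro x. destruct (H x) as [HU HV].
  assert (Hd := is_derive_plus _ _ x _ _ (is_derive_Cmod_sqr _ _ _ HU) (is_derive_Cmod_sqr _ _ _ HV)).
  unfold plus in Hd; simpl in Hd.
  replace 0 with (2 * Cdot (U x) (NLu m al be (U x) (V x)) + 2 * Cdot (V x) (NLv m al be (U x) (V x)))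
    by (generalize (Cdot_NL_mass m al be (U x) (V x)); lra).
  exact Hd.
Qed.

Lemma sqr_sub_le_of_derive_bound (phi dphi : R -> R) (M a b : R) :
  (forall s, is_derive phi s (dphi s)) -> (forall s, Rabs (dphi s) <= M) ->
  (phi b - phi a) ^ 2 <= M ^ 2 * (b - a) ^ 2.
Proof.
  intros Hd HM.
  assert (Hle : forall a b, a <= b -> (phi b - phi a) ^ 2 <= M ^ 2 * (b - a) ^ 2).
  { intros a' b' Hab. destruct (MVT_is_derive phi dphi a' b' Hab Hd) as [c [_ E]].
    rewrite E, Rpow_mult_distr, <- (pow2_abs (dphi c)).
    apply Rmult_le_compat_r; [apply pow2_ge_0|].
    apply pow_incr. split; [apply Rabs_pos | apply HM]. }
  destruct (Rle_dec a b) as [H|H]; [auto|].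
  replace ((phi b - phi a) ^ 2) with ((phi a - phi b) ^ 2) by ring.
  replace ((b - a) ^ 2) with ((a - b) ^ 2) by ring. apply Hle; lra.
Qed.

Lemma Cmod_sub_sqr_le_of_derive_bound (g dg : R -> C) (M a b : R) :
  (forall s, is_derive g s (dg s)) -> (forall s, Cmod (dg s) <= M) ->
  Cmod (g b - g a) ^ 2 <= 2 * M ^ 2 * (b - a) ^ 2.
Proof.
  intros Hd HM. rewrite Cmod2_alt. unfold Re, Im.
  assert (H1 := sqr_sub_le_of_derive_bound (fun s => fst (g s)) (fun s => fst (dg s)) M a b
                 (fun s => is_derive_fst _ _ _ (Hd s))
                 (fun s => Rle_trans _ _ _ (re_le_Cmod (dg s)) (HM s))).
  assert (H2 := sqr_sub_le_of_derive_bound (fun s => snd (g s)) (fun s => snd (dg s)) M a b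
                 (fun s => is_derive_snd _ _ _ (Hd s))
                 (fun s => Rle_trans _ _ _ (Rle_trans _ _ _ (Rmax_r _ _) (Rmax_Cmod (dg s))) (HM s))).
  simpl. lra.
Qed.

Fixpoint wsum (g : Z -> R) (a : Z) (len : nat) : R :=
  match len with O => 0 | S l => g a + wsum g (a + 1)%Z l end.

Lemma wsum_nonneg (g : Z -> R) (a : Z) (l : nat) : (forall k, 0 <= g k) -> 0 <= wsum g a l.
Proof.
  intro H. revert a. induction l as [|l IH]; intro a; simpl; [lra|].
  generalize (H a) (IH (a + 1)%Z). lra.
Qed.

Lemma wsum_add_len (g : Z -> R) (a : Z) (k l : nat) :
  wsum g a (k + l) = wsum g a k + wsum g (a + Z.of_nat k)%Z l.
Proof.
  revert a. induction k as [|k IH]; intro a; simpl.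
  - rewrite Z.add_0_r. ring.
  - rewrite IH. replace (a + 1 + Z.of_nat k)%Z with (a + Z.pos (Pos.of_succ_nat k))%Z by lia. ring.
Qed.

Lemma wsum_ext (g h : Z -> R) (a : Z) (l : nat) : (forall k, g k = h k) -> wsum g a l = wsum h a l.
Proof. intro H. revert a. induction l as [|l IH]; intro a; simpl; [reflexivity|]. rewrite H, IH. reflexivity. Qed.

Lemma wsum_plus (g h : Z -> R) (a : Z) (l : nat) :
  wsum (fun k => g k + h k) a l = wsum g a l + wsum h a l.
Proof. revert a. induction l as [|l IH]; intro a; simpl; [ring|]. rewrite IH. ring. Qed.

Lemma wsum_mult_r (g : Z -> R) (c : R) (a : Z) (l : nat) :
  wsum (fun k => g k * c) a l = wsum g a l * c.
Proof. revert a. induction l as [|l IH]; intro a; simpl; [ring|]. rewrite IH. ring. Qed.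

Lemma wsum_shift (g : Z -> R) (d a : Z) (l : nat) :
  wsum (fun k => g (k + d)%Z) a l = wsum g (a + d)%Z l.
Proof.
  revert a. induction l as [|l IH]; intro a; simpl; [reflexivity|].
  rewrite IH. do 2 f_equal. lia.
Qed.

Lemma wsum_le_subwindow (g : Z -> R) (a b : Z) (l L : nat) : (forall k, 0 <= g k) ->
  (a <= b)%Z -> (b + Z.of_nat l <= a + Z.of_nat L)%Z -> wsum g b l <= wsum g a L.
Proof.
  intros Hg Hab HbL.
  set (k := Z.to_nat (b - a)). set (r := (L - k - l)%nat).
  replace L with (k + (l + r))%nat by (unfold r, k; lia).
  rewrite !wsum_add_len. replace (a + Z.of_nat k)%Z with b by (unfold k; lia).
  generalize (wsum_nonneg g a k Hg) (wsum_nonneg g (b + Z.of_nat l)%Z r Hg). lra.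
Qed.

Lemma zsum_wsum (g : Z -> R) (N : nat) : zsum g N = wsum g (- Z.of_nat N)%Z (S (2 * N)).
Proof.
  unfold zsum. generalize (2 * N)%nat as n. induction n as [|n IH].
  - simpl. replace (0 - Z.of_nat N)%Z with (- Z.of_nat N)%Z by lia. ring.
  - change (sum_f_R0 (fun k => g (Z.of_nat k - Z.of_nat N)%Z) (S n))
      with (sum_f_R0 (fun k => g (Z.of_nat k - Z.of_nat N)%Z) n + g (Z.of_nat (S n) - Z.of_nat N)%Z).
    rewrite IH. replace (S (S n)) with (S n + 1)%nat by lia.
    rewrite wsum_add_len. cbn [wsum]. rewrite Rplus_0_r. do 2 f_equal. lia.
Qed.

Section SchemeMass.

Variables (u v : nat -> Z -> C) (tau c0 : R).

Let mass (n : nat) (k : Z) : R := Cmod (u n k) ^ 2 + Cmod (v n k) ^ 2.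

(* The transport step moves [u] one cell right and [v] one cell left; the ODE step
   preserves the pointwise mass. *)
Hypothesis mass_step : forall n k,
  mass (S n) k = Cmod (u n (k - 1)%Z) ^ 2 + Cmod (v n (k + 1)%Z) ^ 2.

Lemma mass_nonneg (n : nat) (k : Z) : 0 <= mass n k.
Proof. unfold mass. generalize (pow2_ge_0 (Cmod (u n k))) (pow2_ge_0 (Cmod (v n k))). lra. Qed.

Lemma wsum_mass_step (n : nat) (a : Z) (l : nat) :
  wsum (mass (S n)) a l <= wsum (mass n) (a - 1)%Z (l + 2).
Proof.
  set (gu := fun k => Cmod (u n k) ^ 2). set (gv := fun k => Cmod (v n k) ^ 2).
  assert (Hgu : forall k, 0 <= gu k) by (intro; apply pow2_ge_0).
  assert (Hgv : forall k, 0 <= gv k) by (intro; apply pow2_ge_0).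
  rewrite (wsum_ext _ (fun k => gu (k + -1)%Z + gv (k + 1)%Z)).
  2:{ intro k. rewrite mass_step. unfold gu, gv. replace (k + -1)%Z with (k - 1)%Z by lia. reflexivity. }
  rewrite (wsum_ext (mass n) (fun k => gu k + gv k)) by reflexivity.
  rewrite !wsum_plus, !wsum_shift.
  assert (wsum gu (a + -1)%Z l <= wsum gu (a - 1)%Z (l + 2)) by (apply wsum_le_subwindow; auto; lia).
  assert (wsum gv (a + 1)%Z l <= wsum gv (a - 1)%Z (l + 2)) by (apply wsum_le_subwindow; auto; lia).
  lra.
Qed.

Lemma wsum_mass_le_initial (n : nat) (a : Z) (l : nat) :
  wsum (mass n) a l <= wsum (mass 0) (a - Z.of_nat n)%Z (l + 2 * n).
Proof.
  revert a l. induction n as [|n IH]; intros a l.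
  - replace (a - Z.of_nat 0)%Z with a by lia. replace (l + 2 * 0)%nat with l by lia. lra.
  - eapply Rle_trans; [apply wsum_mass_step | eapply Rle_trans; [apply IH|]].
    replace (a - 1 - Z.of_nat n)%Z with (a - Z.of_nat (S n))%Z by lia.
    replace (l + 2 + 2 * n)%nat with (l + 2 * S n)%nat by lia. lra.
Qed.

Lemma local_mass_le_initial (n : nat) (j : Z) :
  (forall N : nat, zsum (fun k => mass 0 k * tau) N <= c0) -> 0 < tau ->
  (Cmod (u n j) ^ 2 + Cmod (v n (j + 2)%Z) ^ 2) * tau <= c0.
Proof.
  intros Hc0 Htau.
  assert (Hwin : Cmod (u n j) ^ 2 + Cmod (v n (j + 2)%Z) ^ 2 <= wsum (mass n) j 3).
  { simpl. replace (j + 1 + 1)%Z with (j + 2)%Z by lia.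
    generalize (pow2_ge_0 (Cmod (v n j))) (pow2_ge_0 (Cmod (u n (j + 2)%Z))) (mass_nonneg n (j + 1)).
    unfold mass. lra. }
  set (N := (Z.to_nat (Z.abs j) + n + 3)%nat).
  assert (Hsub : wsum (mass 0) (j - Z.of_nat n)%Z (3 + 2 * n)
                 <= wsum (mass 0) (- Z.of_nat N)%Z (S (2 * N)))
    by (apply wsum_le_subwindow; [apply mass_nonneg | unfold N; lia | unfold N; lia]).
  assert (HN := Hc0 N). rewrite zsum_wsum, wsum_mult_r in HN.
  assert (Hn := wsum_mass_le_initial n j 3).
  apply Rmult_le_compat_r with (r := tau) in Hwin, Hn, Hsub; lra.
Qed.

End SchemeMass.

Lemma scheme_cell_mass_le (m al be tau c0 : R) (u0 v0 : Z -> C) (u v : nat -> Z -> C)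
    (U2 V2 : nat -> Z -> R -> C) : 0 < tau ->
  (forall j, u 0%nat j = u0 j /\ v 0%nat j = v0 j) ->
  (forall n j, U2 n j 0 = u n (j - 1)%Z /\ V2 n j 0 = v n (j + 1)%Z) ->
  (forall n j s,
     is_derive (U2 n j) s (NLu m al be (U2 n j s) (V2 n j s)) /\
     is_derive (V2 n j) s (NLv m al be (U2 n j s) (V2 n j s))) ->
  (forall n j, u (S n) j = U2 n j tau /\ v (S n) j = V2 n j tau) ->
  (forall N : nat, zsum (fun j => (Cmod (u0 j) ^ 2 + Cmod (v0 j) ^ 2) * tau) N <= c0) ->
  forall n j, (Cmod (U2 n j 0) ^ 2 + Cmod (V2 n j 0) ^ 2) * tau <= c0.
Proof.
  intros Htau Hinit Hstart HODE Hnext Hmass0 n j.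
  destruct (Hstart n j) as [-> ->]. replace (j + 1)%Z with (j - 1 + 2)%Z by lia.
  apply (local_mass_le_initial u v tau c0); [| |exact Htau].
  - intros n' k. destruct (Hnext n' k) as [-> ->].
    rewrite (NL_flow_mass m al be _ _ (HODE n' k) tau). destruct (Hstart n' k) as [-> ->]. reflexivity.
  - intro N. unfold zsum. erewrite sum_eq; [apply (Hmass0 N)|].
    intros i _. simpl. destruct (Hinit (Z.of_nat i - Z.of_nat N)%Z) as [-> ->]. reflexivity.
Qed.

Lemma affine_product_le (F0 Q0 h a c tau : R) :
  0 <= F0 -> 0 <= Q0 -> 0 <= h -> 0 <= a -> 0 < tau < 1 -> tau * Q0 <= c ->
  (F0 + h * tau) * (Q0 + a * tau) <= F0 * Q0 + a * F0 + (c + a) * h.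
Proof.
  intros HF HQ Hh Ha Ht Hc.
  assert (HaF := Rmult_le_pos _ _ Ha HF). assert (Hah := Rmult_le_pos _ _ Ha Hh).
  assert (F0 * (a * tau) <= a * F0) by nra.
  assert (h * tau * Q0 <= c * h) by nra.
  assert (h * tau * (a * tau) <= a * h) by (assert (tau * tau <= 1) by nra; nra).
  nra.
Qed.

Section ErrorDifferentialInequalities.

Variables (A B Kq m c0 : R).
Hypotheses (HA : 0 <= A) (HB : 0 <= B) (HKq : 0 <= Kq) (Hm : 0 <= m) (Hc0 : 0 < c0).

Definition growth_sum : R := exp (A * (c0 + 2)).
Definition growth_F : R := exp (A * c0).
Definition growth_Q : R := exp (1 + Kq * c0).

Definition rate_L : R :=
  A * growth_F * growth_Q * (1 + m ^ 2 * c0 + (c0 + m ^ 2 * c0) * (A * growth_sum))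
  + A * growth_sum.

Definition rate_N : R :=
  (A * growth_F * growth_Q * (c0 + m ^ 2 * c0) + 1) * (2 * A * B * growth_sum + B).

Lemma growth_nonneg : 0 <= A * growth_F * growth_Q /\ 0 <= A * growth_sum.
Proof.
  unfold growth_sum, growth_F, growth_Q.
  generalize (exp_pos (A * (c0 + 2))) (exp_pos (A * c0)) (exp_pos (1 + Kq * c0)). intros.
  split; repeat apply Rmult_le_pos; lra.
Qed.

Lemma rate_L_nonneg : 0 <= rate_L.
Proof.
  unfold rate_L. destruct growth_nonneg as [H1 H2].
  assert (0 <= m ^ 2 * c0) by (generalize (pow2_ge_0 m); nra).
  assert (0 <= (c0 + m ^ 2 * c0) * (A * growth_sum)) by (apply Rmult_le_pos; lra).
  assert (0 <= A * growth_F * growth_Q * (1 + m ^ 2 * c0 + (c0 + m ^ 2 * c0) * (A * growth_sum)))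
    by (apply Rmult_le_pos; lra).
  lra.
Qed.

Lemma rate_N_nonneg : 0 <= rate_N.
Proof.
  unfold rate_N. destruct growth_nonneg as [H1 H2].
  assert (0 <= m ^ 2 * c0) by (generalize (pow2_ge_0 m); nra).
  assert (0 <= 2 * A * B * growth_sum + B) by (generalize (Rmult_le_pos _ _ H2 HB); nra).
  apply Rmult_le_pos; [generalize (Rmult_le_pos _ (c0 + m ^ 2 * c0) H1); lra | lra].
Qed.

(* [F], [G] are the squared errors along the two characteristics and [P], [Q] the squared
   moduli of the ODE solution; [N] stands for [M^2 tau^2]. *)
Variables (tau N W : R) (F G P Q dF dG dQ : R -> R).
Hypotheses (Htau : 0 < tau < 1) (HN : 0 <= N) (HW : W * tau <= c0).
Hypotheses (HdF : forall s, is_derive F s (dF s)) (HdG : forall s, is_derive G s (dG s))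
           (HdQ : forall s, is_derive Q s (dQ s)).
Hypothesis Hpos : forall s, 0 <= s <= tau ->
  0 <= F s /\ 0 <= G s /\ 0 <= P s /\ 0 <= Q s /\ P s + Q s = W.
Hypothesis HiF : forall s, 0 <= s <= tau -> dF s <= A * (F s * Q s + F s + G s) + B * N.
Hypothesis HiG : forall s, 0 <= s <= tau -> dG s <= A * (G s * P s + G s + F s) + B * N.
Hypothesis HiQ : forall s, 0 <= s <= tau -> dQ s <= Q s / tau + Kq * W * Q s + m ^ 2 * tau * W.

Lemma W_nonneg : 0 <= W.
Proof. destruct (Hpos 0) as (_ & _ & HP & HQ & HPQ); lra. Qed.

Lemma FG_le (s : R) : 0 <= s <= tau -> F s + G s <= growth_sum * (F 0 + G 0 + 2 * B * N).
Proof.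
  intro Hs. assert (HW0 := W_nonneg).
  assert (Hi : forall x, 0 <= x <= tau -> dF x + dG x <= A * (W + 2) * (F x + G x) + 2 * B * N).
  { intros x Hx. destruct (Hpos x Hx) as (h1 & h2 & h3 & h4 & h5).
    generalize (HiF x Hx) (HiG x Hx). intros.
    assert (F x * Q x + G x * P x <= (F x + G x) * W) by nra.
    assert (A * (F x * Q x + G x * P x) <= A * ((F x + G x) * W)) by (apply Rmult_le_compat_l; lra).
    nra. }
  assert (Hg := gronwall_affine (fun x => F x + G x) (fun x => dF x + dG x) (A * (W + 2)) (2 * B * N)
                  tau ltac:(nra) ltac:(nra) (fun x => is_derive_plus _ _ x _ _ (HdF x) (HdG x)) Hi s Hs).
  eapply Rle_trans; [exact Hg|]. destruct (Hpos 0) as (h1 & h2 & _); [lra|].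
  assert (HBN : 0 <= B * N) by (apply Rmult_le_pos; lra).
  assert (HWs : W * s <= c0) by nra.
  apply Rmult_le_compat; [left; apply exp_pos | nra | |nra].
  apply exp_le_compat. rewrite Rmult_assoc. apply Rmult_le_compat_l; nra.
Qed.

Let hF : R := A * growth_sum * (F 0 + G 0 + 2 * B * N) + B * N.

Lemma F_le (s : R) : 0 <= s <= tau -> F s <= growth_F * (F 0 + hF * tau).
Proof.
  intro Hs. assert (HW0 := W_nonneg).
  assert (Hi : forall x, 0 <= x <= tau -> dF x <= A * W * F x + hF).
  { intros x Hx. destruct (Hpos x Hx) as (h1 & h2 & h3 & h4 & h5).
    assert (H1 := HiF x Hx). assert (H2 := FG_le x Hx).
    assert (A * (F x * Q x) <= A * (F x * W)) by (apply Rmult_le_compat_l; nra).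
    assert (A * (F x + G x) <= A * (growth_sum * (F 0 + G 0 + 2 * B * N))) by (apply Rmult_le_compat_l; lra).
    unfold hF. nra. }
  assert (HhF : 0 <= hF).
  { destruct (Hpos 0) as (h1 & h2 & _); [lra|]. unfold hF, growth_sum.
    generalize (exp_pos (A * (c0 + 2))). intro. assert (0 <= B * N) by nra.
    assert (0 <= A * exp (A * (c0 + 2))) by nra. nra. }
  assert (Hg := gronwall_affine F dF (A * W) hF tau ltac:(nra) HhF HdF Hi s Hs).
  eapply Rle_trans; [exact Hg|]. destruct (Hpos 0) as (h1 & _); [lra|].
  apply Rmult_le_compat; [left; apply exp_pos | nra | |nra].
  apply exp_le_compat. rewrite Rmult_assoc. apply Rmult_le_compat_l; nra.
Qed.

Lemma Q_le (s : R) : 0 <= s <= tau -> Q s <= growth_Q * (Q 0 + m ^ 2 * c0 * tau).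
Proof.
  intro Hs. assert (HW0 := W_nonneg).
  assert (Hit : 0 < / tau) by (apply Rinv_0_lt_compat; lra).
  assert (Hi : forall x, 0 <= x <= tau -> dQ x <= (/ tau + Kq * W) * Q x + m ^ 2 * tau * W).
  { intros x Hx. assert (H := HiQ x Hx). unfold Rdiv in H.
    replace ((/ tau + Kq * W) * Q x) with (Q x * / tau + Kq * W * Q x) by ring. lra. }
  assert (Hg := gronwall_affine Q dQ (/ tau + Kq * W) (m ^ 2 * tau * W) tau
                  ltac:(generalize (Rmult_le_pos _ _ HKq HW0); lra)
                  ltac:(generalize (pow2_ge_0 m); intro; repeat apply Rmult_le_pos; lra) HdQ Hi s Hs).
  eapply Rle_trans; [exact Hg|]. destruct (Hpos 0) as (_ & _ & _ & h4 & _); [lra|].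
  assert (HWs : W * s <= c0) by nra.
  assert (Hm2 : 0 <= m ^ 2 * tau * W * s) by (generalize (pow2_ge_0 m); intro; repeat apply Rmult_le_pos; lra).
  apply Rmult_le_compat; [left; apply exp_pos | lra | |].
  - apply exp_le_compat.
    assert (/ tau * s <= 1) by (replace 1 with (/ tau * tau) by (field; lra); apply Rmult_le_compat_l; lra).
    assert (Kq * (W * s) <= Kq * c0) by (apply Rmult_le_compat_l; lra). nra.
  - assert (m ^ 2 * tau * (W * s) <= m ^ 2 * tau * c0)
      by (apply Rmult_le_compat_l; [generalize (pow2_ge_0 m); nra | exact HWs]).
    nra.
Qed.

Lemma FQ_le (s : R) : 0 <= s <= tau ->
  A * (F s * Q s)
  <= A * growth_F * growth_Q * (F 0 * Q 0 + m ^ 2 * c0 * F 0 + (c0 + m ^ 2 * c0) * hF).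
Proof.
  intro Hs. assert (HW0 := W_nonneg).
  destruct (Hpos s Hs) as (Fs & Gs & Ps & Qs & PQs).
  destruct (Hpos 0) as (F0 & G0 & P0 & Q0 & PQ0); [lra|].
  destruct growth_nonneg as [_ HY].
  assert (HBN : 0 <= B * N) by (apply Rmult_le_pos; lra).
  assert (HhF : 0 <= hF) by (unfold hF; generalize (Rmult_le_pos _ _ HY HBN); nra).
  assert (Hm2 : 0 <= m ^ 2 * c0) by (generalize (pow2_ge_0 m); nra).
  assert (HgF := exp_pos (A * c0)). assert (HgQ := exp_pos (1 + Kq * c0)).
  fold growth_F growth_Q in HgF, HgQ.
  rewrite !Rmult_assoc. apply Rmult_le_compat_l; [exact HA|]. rewrite <- !Rmult_assoc.
  eapply Rle_trans; [apply Rmult_le_compat; [lra | lra | apply F_le, Hs | apply Q_le, Hs]|].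
  replace (growth_F * (F 0 + hF * tau) * (growth_Q * (Q 0 + m ^ 2 * c0 * tau)))
    with (growth_F * growth_Q * ((F 0 + hF * tau) * (Q 0 + m ^ 2 * c0 * tau))) by ring.
  apply Rmult_le_compat_l; [nra|].
  apply affine_product_le; try lra. nra.
Qed.

Lemma dF_le (s : R) : 0 <= s <= tau ->
  dF s <= rate_L * ((F 0 + G 0) + (F 0 * Q 0 + G 0 * P 0)) + rate_N * N.
Proof.
  intro Hs.
  destruct (Hpos 0) as (F0 & G0 & P0 & Q0 & PQ0); [lra|].
  destruct growth_nonneg as [HZ HY].
  assert (Hm2 : 0 <= m ^ 2 * c0) by (generalize (pow2_ge_0 m); nra).
  assert (HAFQ := FQ_le s Hs).
  assert (HAFG : A * (F s + G s) <= A * growth_sum * (F 0 + G 0 + 2 * B * N)).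
  { rewrite Rmult_assoc. apply Rmult_le_compat_l; [exact HA | apply FG_le, Hs]. }
  assert (HD0 : F 0 * Q 0 <= (F 0 + G 0) + (F 0 * Q 0 + G 0 * P 0)) by nra.
  assert (HL0 : F 0 + G 0 <= (F 0 + G 0) + (F 0 * Q 0 + G 0 * P 0)) by nra.
  assert (HiFs := HiF s Hs). unfold rate_L, rate_N. unfold hF in HAFQ.
  set (Z := A * growth_F * growth_Q) in *. set (Y := A * growth_sum) in *.
  set (L := (F 0 + G 0) + (F 0 * Q 0 + G 0 * P 0)) in *.
  assert (Z * (F 0 * Q 0) <= Z * L) by (apply Rmult_le_compat_l; lra).
  assert (Z * (m ^ 2 * c0 * F 0) <= Z * (m ^ 2 * c0) * L)
    by (rewrite (Rmult_assoc Z); apply Rmult_le_compat_l; [lra | apply Rmult_le_compat_l; lra]).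
  assert (Z * ((c0 + m ^ 2 * c0) * (Y * (F 0 + G 0))) <= Z * ((c0 + m ^ 2 * c0) * Y) * L).
  { replace (Z * ((c0 + m ^ 2 * c0) * (Y * (F 0 + G 0))))
      with (Z * ((c0 + m ^ 2 * c0) * Y) * (F 0 + G 0)) by ring.
    apply Rmult_le_compat_l; [apply Rmult_le_pos; [lra | apply Rmult_le_pos; lra] | lra]. }
  assert (Y * (F 0 + G 0) <= Y * L) by (apply Rmult_le_compat_l; lra).
  match goal with |- _ <= ?r =>
    replace r with (Z * L + Z * (m ^ 2 * c0) * L + Z * ((c0 + m ^ 2 * c0) * Y) * L + Y * L
      + (Z * (c0 + m ^ 2 * c0) * (2 * A * B * growth_sum + B) + (2 * A * B * growth_sum + B)) * N)
      by ring end.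
  replace (Y * (F 0 + G 0 + 2 * B * N)) with (Y * (F 0 + G 0) + 2 * A * B * growth_sum * N)
    in HAFG by (unfold Y; ring).
  replace (Z * (F 0 * Q 0 + m ^ 2 * c0 * F 0 + (c0 + m ^ 2 * c0) * (Y * (F 0 + G 0 + 2 * B * N) + B * N)))
    with (Z * (F 0 * Q 0) + Z * (m ^ 2 * c0 * F 0) + Z * ((c0 + m ^ 2 * c0) * (Y * (F 0 + G 0)))
          + Z * (c0 + m ^ 2 * c0) * (2 * A * B * growth_sum + B) * N) in HAFQ by (unfold Y; ring).
  lra.
Qed.

Lemma F_increment_le :
  F tau <= F 0 + (rate_L + 1) * ((F 0 + G 0) + (F 0 * Q 0 + G 0 * P 0)) * tau + (rate_N + 1) * N.
Proof.
  assert (H := increment_le_of_derive_le F dF tau _ ltac:(lra) HdF dF_le).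
  destruct (Hpos 0) as (F0 & G0 & P0 & Q0 & _); [lra|].
  assert (HL : 0 <= (F 0 + G 0) + (F 0 * Q 0 + G 0 * P 0)) by nra.
  assert (0 <= rate_L * ((F 0 + G 0) + (F 0 * Q 0 + G 0 * P 0)) * tau)
    by (repeat apply Rmult_le_pos; try apply rate_L_nonneg; lra).
  assert (rate_N * N * tau <= rate_N * N)
    by (generalize (Rmult_le_pos _ _ rate_N_nonneg HN); nra).
  nra.
Qed.

End ErrorDifferentialInequalities.

Section OneStep.

Variables (m al be M0 M T c0 : R) (uh vh uh_t uh_x vh_t vh_x : R -> R -> C).
Hypotheses (Hm : 0 <= m) (Hc0 : 0 < c0) (Huh : smooth2 uh) (Hvh : smooth2 vh).
Hypotheses (Hut : forall x t, is_derive (fun s => uh x s) t (uh_t x t))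
           (Hux : forall x t, is_derive (fun y => uh y t) x (uh_x x t))
           (Hvt : forall x t, is_derive (fun s => vh x s) t (vh_t x t))
           (Hvx : forall x t, is_derive (fun y => vh y t) x (vh_x x t)).
Hypothesis Hpde : forall x t, 0 <= t <= T ->
  (uh_t x t + uh_x x t)%C = NLu m al be (uh x t) (vh x t) /\
  (vh_t x t - vh_x x t)%C = NLv m al be (uh x t) (vh x t).
Hypothesis Hbound : forall x t, 0 <= t <= T -> Cmod (uh x t) <= M0 /\ Cmod (vh x t) <= M0.
Hypothesis Hbound_x : forall x t, 0 <= t <= T -> Cmod (uh_x x t) <= M /\ Cmod (vh_x x t) <= M.

Variables (tau x0 x1 t0 : R) (U V : R -> C).
Hypotheses (Htau : 0 < tau < 1) (Hx1 : x1 = x0 + 2 * tau) (Ht0 : 0 <= t0) (HtT : t0 + tau <= T).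
Hypothesis HODE : forall s,
  is_derive U s (NLu m al be (U s) (V s)) /\ is_derive V s (NLv m al be (U s) (V s)).
Hypothesis Hmass : (Cmod (U 0) ^ 2 + Cmod (V 0) ^ 2) * tau <= c0.

Let Uc (s : R) : C := (uh (x0 + s) (t0 + s) - U s)%C.
Let Vc (s : R) : C := (vh (x1 - s) (t0 + s) - V s)%C.
Let A : R := NL_lip m al be M0.

Lemma M0_nonneg : 0 <= M0.
Proof. destruct (Hbound 0 t0) as [H _]; [lra|]. generalize (Cmod_ge_0 (uh 0 t0)); lra. Qed.

Lemma characteristic_gap_le (p p_x : R -> R -> C) (s : R) : 0 <= s <= tau ->
  (forall x t, is_derive (fun y => p y t) x (p_x x t)) ->
  (forall x t, 0 <= t <= T -> Cmod (p_x x t) <= M) ->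
  Cmod (p (x0 + s) (t0 + s) - p (x1 - s) (t0 + s)) ^ 2 <= 8 * (M ^ 2 * tau ^ 2).
Proof.
  intros Hs Hd Hb.
  assert (H := Cmod_sub_sqr_le_of_derive_bound (fun y => p y (t0 + s)) (fun y => p_x y (t0 + s)) M
                 (x1 - s) (x0 + s) (fun y => Hd y _) (fun y => Hb y (t0 + s) ltac:(lra))).
  eapply Rle_trans; [exact H|]. rewrite Hx1.
  replace (x0 + s - (x0 + 2 * tau - s)) with (2 * (s - tau)) by ring.
  assert ((2 * (s - tau)) ^ 2 <= 4 * tau ^ 2) by nra.
  generalize (pow2_ge_0 M). nra.
Qed.

Let dF (s : R) : R :=
  2 * Cdot (Uc s) (uh_x (x0 + s) (t0 + s) + uh_t (x0 + s) (t0 + s) - NLu m al be (U s) (V s)).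
Let dG (s : R) : R :=
  2 * Cdot (Vc s) (- vh_x (x1 - s) (t0 + s) + vh_t (x1 - s) (t0 + s) - NLv m al be (U s) (V s)).

Lemma Uc_sqr_derive (s : R) : is_derive (fun s => Cmod (Uc s) ^ 2) s (dF s).
Proof.
  assert (H := is_derive_Cmod_sqr_line_sub uh uh_t uh_x U (fun s => NLu m al be (U s) (V s))
                 x0 t0 1 s Huh Hut Hux (fun s => proj1 (HODE s))).
  unfold dF, Uc. rewrite Rmult_1_l, Cmult_1_l in H.
  eapply is_derive_ext; [|exact H]. intro y. simpl. rewrite Rmult_1_l. reflexivity.
Qed.

Lemma Vc_sqr_derive (s : R) : is_derive (fun s => Cmod (Vc s) ^ 2) s (dG s).
Proof.
  assert (H := is_derive_Cmod_sqr_line_sub vh vh_t vh_x V (fun s => NLv m al be (U s) (V s))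
                 x1 t0 (-1) s Hvh Hvt Hvx (fun s => proj2 (HODE s))).
  replace (x1 + -1 * s) with (x1 - s) in H by ring.
  replace (RtoC (-1) * vh_x (x1 - s) (t0 + s))%C with (- vh_x (x1 - s) (t0 + s))%C in H
    by (apply injective_projections; simpl; ring).
  unfold dG, Vc. eapply is_derive_ext; [|exact H]. intro y. simpl.
  replace (x1 + -1 * y) with (x1 - y) by ring. reflexivity.
Qed.

Lemma Uc_sqr_derive_le (s : R) : 0 <= s <= tau ->
  dF s <= A * (Cmod (Uc s) ^ 2 * Cmod (V s) ^ 2 + Cmod (Uc s) ^ 2 + Cmod (Vc s) ^ 2)
          + 8 * A * (M ^ 2 * tau ^ 2).
Proof.
  intro Hs. destruct (Hpde (x0 + s) (t0 + s) ltac:(lra)) as [Heq _].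
  destruct (Hbound (x0 + s) (t0 + s) ltac:(lra)) as [Ha Hb].
  assert (Hgap := characteristic_gap_le vh vh_x s Hs Hvx (fun x t Ht => proj2 (Hbound_x x t Ht))).
  assert (HA : 0 <= A) by (apply NL_lip_ge0; [exact Hm | apply M0_nonneg]).
  unfold dF, Uc.
  replace (uh_x (x0 + s) (t0 + s) + uh_t (x0 + s) (t0 + s))%C
    with (uh_t (x0 + s) (t0 + s) + uh_x (x0 + s) (t0 + s))%C
    by (apply injective_projections; simpl; ring).
  rewrite Heq.
  eapply Rle_trans; [apply (Cdot_NLu_sub_le_lip m al be M0 _ _ (vh (x1 - s) (t0 + s))); eauto|].
  fold A. assert (A * Cmod (vh (x0 + s) (t0 + s) - vh (x1 - s) (t0 + s)) ^ 2 <= A * (8 * (M ^ 2 * tau ^ 2)))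
    by (apply Rmult_le_compat_l; auto).
  unfold Vc. lra.
Qed.

Lemma Vc_sqr_derive_le (s : R) : 0 <= s <= tau ->
  dG s <= A * (Cmod (Vc s) ^ 2 * Cmod (U s) ^ 2 + Cmod (Vc s) ^ 2 + Cmod (Uc s) ^ 2)
          + 8 * A * (M ^ 2 * tau ^ 2).
Proof.
  intro Hs. destruct (Hpde (x1 - s) (t0 + s) ltac:(lra)) as [_ Heq].
  destruct (Hbound (x1 - s) (t0 + s) ltac:(lra)) as [Hb Ha].
  assert (Hgap := characteristic_gap_le uh uh_x s Hs Hux (fun x t Ht => proj1 (Hbound_x x t Ht))).
  rewrite Cmod_sub_sym in Hgap.
  assert (HA : 0 <= A) by (apply NL_lip_ge0; [exact Hm | apply M0_nonneg]).
  unfold dG, Vc.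
  replace (- vh_x (x1 - s) (t0 + s) + vh_t (x1 - s) (t0 + s))%C
    with (vh_t (x1 - s) (t0 + s) - vh_x (x1 - s) (t0 + s))%C
    by (apply injective_projections; simpl; ring).
  rewrite Heq, !NLv_NLu.
  eapply Rle_trans; [apply (Cdot_NLu_sub_le_lip m al be M0 _ _ (uh (x0 + s) (t0 + s))); eauto|].
  fold A. assert (A * Cmod (uh (x1 - s) (t0 + s) - uh (x0 + s) (t0 + s)) ^ 2 <= A * (8 * (M ^ 2 * tau ^ 2)))
    by (apply Rmult_le_compat_l; auto).
  unfold Uc. lra.
Qed.

Let W : R := Cmod (U 0) ^ 2 + Cmod (V 0) ^ 2.

Lemma flow_mass (s : R) : Cmod (U s) ^ 2 + Cmod (V s) ^ 2 = W.
Proof. exact (NL_flow_mass m al be U V HODE s). Qed.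

Lemma V_sqr_derive_le (s : R) :
  2 * Cdot (V s) (NLv m al be (U s) (V s))
  <= Cmod (V s) ^ 2 / tau + 4 * Rabs be * W * Cmod (V s) ^ 2 + m ^ 2 * tau * W.
Proof.
  assert (H := Cdot_NLv_self_le m al be tau (U s) (V s) ltac:(lra) Hm).
  assert (HW := flow_mass s). generalize (pow2_ge_0 (Cmod (U s))) (pow2_ge_0 (Cmod (V s))). intros.
  assert (4 * Rabs be * Cmod (U s) ^ 2 * Cmod (V s) ^ 2 <= 4 * Rabs be * W * Cmod (V s) ^ 2)
    by (apply Rmult_le_compat_r; [lra | apply Rmult_le_compat_l; generalize (Rabs_pos be); lra]).
  assert (m ^ 2 * tau * Cmod (U s) ^ 2 <= m ^ 2 * tau * W)
    by (apply Rmult_le_compat_l; [generalize (pow2_ge_0 m); nra | lra]).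
  lra.
Qed.

Lemma U_sqr_derive_le (s : R) :
  2 * Cdot (U s) (NLu m al be (U s) (V s))
  <= Cmod (U s) ^ 2 / tau + 4 * Rabs be * W * Cmod (U s) ^ 2 + m ^ 2 * tau * W.
Proof.
  assert (H := Cdot_NLv_self_le m al be tau (V s) (U s) ltac:(lra) Hm). rewrite NLv_NLu in H.
  assert (HW := flow_mass s). generalize (pow2_ge_0 (Cmod (U s))) (pow2_ge_0 (Cmod (V s))). intros.
  assert (4 * Rabs be * Cmod (V s) ^ 2 * Cmod (U s) ^ 2 <= 4 * Rabs be * W * Cmod (U s) ^ 2)
    by (apply Rmult_le_compat_r; [lra | apply Rmult_le_compat_l; generalize (Rabs_pos be); lra]).
  assert (m ^ 2 * tau * Cmod (V s) ^ 2 <= m ^ 2 * tau * W)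
    by (apply Rmult_le_compat_l; [generalize (pow2_ge_0 m); nra | lra]).
  lra.
Qed.

Lemma one_step_error_le :
  let L0 := Cmod (Uc 0) ^ 2 + Cmod (Vc 0) ^ 2 in
  let D0 := Cmod (Uc 0) ^ 2 * Cmod (V 0) ^ 2 + Cmod (Vc 0) ^ 2 * Cmod (U 0) ^ 2 in
  let C4 := rate_L A (4 * Rabs be) m c0 + 1 in
  let C5 := rate_N A (8 * A) (4 * Rabs be) m c0 + 1 in
  Cmod (Uc tau) ^ 2 <= Cmod (Uc 0) ^ 2 + C4 * (L0 + D0) * tau + C5 * M ^ 2 * tau ^ 2 /\
  Cmod (Vc tau) ^ 2 <= Cmod (Vc 0) ^ 2 + C4 * (L0 + D0) * tau + C5 * M ^ 2 * tau ^ 2.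
Proof.
  intros L0 D0 C4 C5.
  assert (HA : 0 <= A) by (apply NL_lip_ge0; [exact Hm | apply M0_nonneg]).
  assert (Hbe : 0 <= 4 * Rabs be) by (generalize (Rabs_pos be); lra).
  assert (HN : 0 <= M ^ 2 * tau ^ 2) by (generalize (pow2_ge_0 M) (pow2_ge_0 tau); nra).
  assert (HW : W * tau <= c0) by exact Hmass.
  assert (Hpos : forall s, 0 <= s <= tau -> 0 <= Cmod (Uc s) ^ 2 /\ 0 <= Cmod (Vc s) ^ 2 /\
                   0 <= Cmod (U s) ^ 2 /\ 0 <= Cmod (V s) ^ 2 /\ Cmod (U s) ^ 2 + Cmod (V s) ^ 2 = W)
    by (intros; repeat split; try apply pow2_ge_0; apply flow_mass).
  assert (HdQ : forall s, is_derive (fun s => Cmod (V s) ^ 2) s (2 * Cdot (V s) (NLv m al be (U s) (V s))))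
    by (intro s; apply is_derive_Cmod_sqr, HODE).
  assert (HdP : forall s, is_derive (fun s => Cmod (U s) ^ 2) s (2 * Cdot (U s) (NLu m al be (U s) (V s))))
    by (intro s; apply is_derive_Cmod_sqr, HODE).
  split.
  - assert (H := F_increment_le A (8 * A) (4 * Rabs be) m c0 HA ltac:(lra) Hbe Hm Hc0
      tau (M ^ 2 * tau ^ 2) W _ _ _ _ dF dG _ Htau HN HW Uc_sqr_derive Vc_sqr_derive HdQ Hpos
      (fun s Hs => Uc_sqr_derive_le s Hs) (fun s Hs => Vc_sqr_derive_le s Hs) (fun s _ => V_sqr_derive_le s)).
    cbv beta in H. unfold L0, D0, C4, C5. lra.
  - assert (Hpos' : forall s, 0 <= s <= tau -> 0 <= Cmod (Vc s) ^ 2 /\ 0 <= Cmod (Uc s) ^ 2 /\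
                     0 <= Cmod (V s) ^ 2 /\ 0 <= Cmod (U s) ^ 2 /\ Cmod (V s) ^ 2 + Cmod (U s) ^ 2 = W)
      by (intros s Hs; destruct (Hpos s Hs) as (? & ? & ? & ? & ?); repeat split; lra).
    assert (H := F_increment_le A (8 * A) (4 * Rabs be) m c0 HA ltac:(lra) Hbe Hm Hc0
      tau (M ^ 2 * tau ^ 2) W _ _ _ _ dG dF _ Htau HN HW Vc_sqr_derive Uc_sqr_derive HdP Hpos'
      (fun s Hs => Vc_sqr_derive_le s Hs) (fun s Hs => Uc_sqr_derive_le s Hs) (fun s _ => U_sqr_derive_le s)).
    cbv beta in H. unfold L0, D0, C4, C5. lra.
Qed.

End OneStep.

Theorem lemma4p4 :
  forall (m alpha beta : R), 0 <= m ->
  forall (c0 M0 M : R), 0 < c0 ->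
  exists C4 C5 : R, 0 < C4 /\ 0 < C5 /\
  forall (T : R), 0 < T ->
  forall (uh vh uh_t uh_x vh_t vh_x : R -> R -> C),
    smooth2 uh -> smooth2 vh ->
    (forall x t, is_derive (fun s => uh x s) t (uh_t x t)) ->
    (forall x t, is_derive (fun y => uh y t) x (uh_x x t)) ->
    (forall x t, is_derive (fun s => vh x s) t (vh_t x t)) ->
    (forall x t, is_derive (fun y => vh y t) x (vh_x x t)) ->
    (forall x t, 0 <= t <= T ->
       (uh_t x t + uh_x x t)%C = NLu m alpha beta (uh x t) (vh x t) /\
       (vh_t x t - vh_x x t)%C = NLv m alpha beta (uh x t) (vh x t)) ->
    is_lub (fun y => exists x t, 0 <= t <= T /\
              y = Cmod (uh x t) + Cmod (vh x t) + 1) M0 ->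
    is_lub (fun y => exists x t, 0 <= t <= T /\
              y = Cmod (uh_t x t) + Cmod (uh_x x t)
                  + Cmod (vh_t x t) + Cmod (vh_x x t) + 1) M ->
  forall (tau : R), 0 < tau < 1 ->
  forall (u0 v0 : Z -> C) (u v : nat -> Z -> C) (U2 V2 : nat -> Z -> R -> C),
    (forall j, u 0%nat j = u0 j /\ v 0%nat j = v0 j) ->
    (forall n j, U2 n j 0 = u n (j - 1)%Z /\ V2 n j 0 = v n (j + 1)%Z) ->
    (forall n j s,
       is_derive (U2 n j) s (NLu m alpha beta (U2 n j s) (V2 n j s)) /\
       is_derive (V2 n j) s (NLv m alpha beta (U2 n j s) (V2 n j s))) ->
    (forall n j, u (S n) j = U2 n j tau /\ v (S n) j = V2 n j tau) ->
    (forall N : nat,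
       zsum (fun j => (Cmod (u0 j) ^ 2 + Cmod (v0 j) ^ 2) * tau) N <= c0) ->
  forall (j : Z) (n : nat), INR (S n) * tau <= T ->
    let Uc := fun s : R => (uh (IZR j * tau + s)%R (INR n * tau + s)%R
                        - U2 n (j + 1)%Z s)%C in
    let Vc := fun s : R => (vh (IZR (j + 2) * tau - s)%R (INR n * tau + s)%R
                        - V2 n (j + 1)%Z s)%C in
    let L0 := Cmod (Uc 0) ^ 2 + Cmod (Vc 0) ^ 2 in
    let D0 := Cmod (Uc 0) ^ 2 * Cmod (V2 n (j + 1)%Z 0) ^ 2
              + Cmod (Vc 0) ^ 2 * Cmod (U2 n (j + 1)%Z 0) ^ 2 in
    Cmod (Uc tau) ^ 2 <= Cmod (Uc 0) ^ 2 + C4 * (L0 + D0) * tau + C5 * M ^ 2 * tau ^ 2 /\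
    Cmod (Vc tau) ^ 2 <= Cmod (Vc 0) ^ 2 + C4 * (L0 + D0) * tau + C5 * M ^ 2 * tau ^ 2.
Proof.
  intros m al be Hm c0 M0 M Hc0.
  set (A := NL_lip m al be (Rabs M0)).
  assert (HA : 0 <= A) by (apply NL_lip_ge0; [exact Hm | apply Rabs_pos]).
  exists (rate_L A (4 * Rabs be) m c0 + 1), (rate_N A (8 * A) (4 * Rabs be) m c0 + 1).
  split; [generalize (rate_L_nonneg A (4 * Rabs be) m c0 HA Hc0); lra|].
  split; [generalize (rate_N_nonneg A (8 * A) (4 * Rabs be) m c0 HA ltac:(lra) Hc0); lra|].
  intros T _ uh vh uh_t uh_x vh_t vh_x Huh Hvh Hut Hux Hvt Hvx Hpde HM0 HM tau Htau
    u0 v0 u v U2 V2 Hinit Hstart HODE Hnext Hmass0 j n Hn.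
  assert (Hbound : forall x t, 0 <= t <= T -> Cmod (uh x t) <= Rabs M0 /\ Cmod (vh x t) <= Rabs M0).
  { intros x t Ht. assert (H := proj1 HM0 _ (ex_intro _ x (ex_intro _ t (conj Ht eq_refl)))).
    generalize (Cmod_ge_0 (uh x t)) (Cmod_ge_0 (vh x t)) (Rle_abs M0). lra. }
  assert (Hbound_x : forall x t, 0 <= t <= T -> Cmod (uh_x x t) <= M /\ Cmod (vh_x x t) <= M).
  { intros x t Ht. assert (H := proj1 HM _ (ex_intro _ x (ex_intro _ t (conj Ht eq_refl)))).
    generalize (Cmod_ge_0 (uh_t x t)) (Cmod_ge_0 (uh_x x t)) (Cmod_ge_0 (vh_t x t)) (Cmod_ge_0 (vh_x x t)).
    lra. }
  rewrite S_INR in Hn. assert (Hn0 := pos_INR n).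
  exact (one_step_error_le m al be (Rabs M0) M T c0 uh vh uh_t uh_x vh_t vh_x Hm Hc0 Huh Hvh
           Hut Hux Hvt Hvx Hpde Hbound Hbound_x tau (IZR j * tau) (IZR (j + 2) * tau) (INR n * tau)
           (U2 n (j + 1)%Z) (V2 n (j + 1)%Z) Htau ltac:(rewrite plus_IZR; simpl; ring)
           ltac:(nra) ltac:(nra) (HODE n (j + 1)%Z)
           (scheme_cell_mass_le m al be tau c0 u0 v0 u v U2 V2 ltac:(lra) Hinit Hstart HODE Hnext Hmass0 n (j + 1)%Z)).
Qed.
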